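(* Let $N \geq 1$ and let $\mu$ be the uniform probability measure on the discrete torus $\mathbb{Z}/(N\mathbb{Z})$. For every probability measure $\nu$ on $\mathbb{Z}/(N\mathbb{Z})$, $$H(\nu|\mu) \leq \sqrt{2}\, W_c(\nu,\mu)\sqrt{I(\nu|\mu)}.$$
   Context: The relative entropy is $H(\nu|\mu) = \sum_{x\in\mathbb{Z}/(N\mathbb{Z})}\nu(x)(\log\nu(x)+\log N)$ (with $0\log 0=0$). The Fisher information is $$I(\nu|\mu) = \sum_{x\in\mathbb{Z}/(N\mathbb{Z})}\big(\log\nu(x+1)-\log\nu(x)\big)\big(\nu(x+1)-\nu(x)\big),$$ (taking the value $+\infty$ if some term is infinite). The transport cost $W_c$ is defined by $$W_c(\nu,\mu)^2 = \inf_{X\sim\nu,\,Y\sim\mu}\mathbb{E}\big[d(X,Y)+d(X,Y)^2\big],$$ with $W_c \geq 0$, where the infimum is over all couplings of $X\sim\nu$ and $Y\sim\mu$, and $d$ is the graph distance on the cycle $\mathbb{Z}/(N\mathbb{Z})$. *)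

From HB Require Import structures.
From mathcomp Require Import all_boot all_order all_algebra.
From mathcomp Require Import all_classical all_reals all_analysis.
Set Implicit Arguments. Unset Strict Implicit. Unset Printing Implicit Defensive.
Import Order.TTheory GRing.Theory Num.Theory.
Local Open Scope ring_scope.

(* The discrete torus Z/(NZ) is represented by 'I_N (for N >= 1). *)

Lemma ord_pos (N : nat) (x : 'I_N) : (0 < N)%N.
Proof. by apply: leq_ltn_trans (ltn_ord x). Qed.

Definition tsucc (N : nat) (x : 'I_N) : 'I_N :=
  Ordinal (ltn_pmod (x.+1) (ord_pos x)).

Definition tdist (N : nat) (x y : 'I_N) : nat :=
  minn ((x + N - y) %% N) ((y + N - x) %% N).

Section Defs.
Variable R : realType.

Definition is_prob (N : nat) (nu : 'I_N -> R) : Prop :=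
  (forall x, 0 <= nu x) /\ \sum_(x < N) nu x = 1.

Definition unif (N : nat) : 'I_N -> R := fun _ => N%:R^-1.

(* relative entropy H(nu|mu) = sum nu(x) (log nu(x) + log N); ln 0 = 0 in
   MathComp-Analysis, so 0 log 0 = 0 *)
Definition rel_entropy (N : nat) (nu : 'I_N -> R) : R :=
  \sum_(x < N) nu x * (ln (nu x) + ln N%:R).

(* Fisher information, +oo if some term is infinite, i.e. if exactly one of
   nu(x), nu(x+1) vanishes; when both vanish the term is 0. *)
Definition fisher (N : nat) (nu : 'I_N -> R) : \bar R :=
  if [exists x : 'I_N, (nu x == 0) != (nu (tsucc x) == 0)] then +oo%E
  else (\sum_(x < N) (ln (nu (tsucc x)) - ln (nu x)) * (nu (tsucc x) - nu x))%:E.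

Definition is_coupling (N : nat) (nu mu : 'I_N -> R) (pi : 'I_N -> 'I_N -> R) : Prop :=
  (forall x y, 0 <= pi x y) /\
  (forall x, \sum_(y < N) pi x y = nu x) /\
  (forall y, \sum_(x < N) pi x y = mu y).

Definition Wc2 (N : nat) (nu mu : 'I_N -> R) : R :=
  inf [set c : R | exists pi, is_coupling nu mu pi /\
        c = \sum_(x < N) \sum_(y < N) pi x y * ((tdist x y)%:R + (tdist x y)%:R ^+ 2)].

Definition Wc (N : nat) (nu mu : 'I_N -> R) : R := Num.sqrt (Wc2 nu mu).

End Defs.

From HB Require Import structures.
From mathcomp Require Import all_boot all_order all_algebra.
From mathcomp Require Import all_classical all_reals all_analysis.
From mathcomp Require Import ring lra.
Import Order.TTheory GRing.Theory Num.Theory.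
Import numFieldNormedType.Exports.
Local Open Scope classical_set_scope.
Local Open Scope ring_scope.

(* Write [rho = sqrt (N nu)].  Pointwise [nu ln (N nu) <= 2 rho (nu - 1/N) - (nu - 1/N)],
   so [H(nu|mu) <= 2 E_nu[rho] - 2 E_mu[rho] = 2 E_pi[rho X - rho Y]] for every
   coupling [pi] of [nu] and [mu].  On the cycle, any [s] and [lam > 0] satisfy
   [s x - s y <= lam (d + d^2) + b y], where [b y] charges the [k]-th edge on either
   side of [y] only with the excess of the increment of [s] across it over [2 lam k];
   summing these excesses gives [sum_y b y <= sum_z (s (z + 1) - s z)^2 / (2 lam)].
   With [T = sum_z (rho (z + 1) - rho z)^2] this yields [H <= 2 lam W_c^2 + T / (N lam)],
   while [4 (sqrt a - sqrt b)^2 <= (ln a - ln b) (a - b)] (logarithmic mean below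
   arithmetic mean) gives [I >= 4 T / N]; optimizing over [lam] concludes.  If [I] is
   infinite, [nu] vanishes somewhere, so [W_c > 0] and the right-hand side is infinite. *)

Section LogInequalities.
Context {R : realType}.
Implicit Types t p q a b v n : R.

Lemma ln_ge_subrV t : 0 < t -> 1 - t^-1 <= ln t.
Proof.
move=> t0; have t1 : -1 < t^-1 - 1 by have := invr_gt0 t; rewrite t0; lra.
by have := le_ln1Dx t1; rewrite addrC subrK lnV ?posrE //; lra.
Qed.

Lemma ln_le_subr1 t : 0 < t -> ln t <= t - 1.
Proof.
move=> t0; have t1 : -1 < t - 1 by lra.
by have := le_ln1Dx t1; rewrite addrC subrK.
Qed.

(* Mean value theorem: the derivative [ln x - 1 + x^-1] of [(x + 1) ln x - 2 x]
   is nonnegative by [ln_ge_subrV]. *)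
Lemma ln_ge_mean_ratio t : 1 <= t -> 2 * (t - 1) <= (t + 1) * ln t.
Proof.
move=> t1; have [->|t_neq1] := eqVneq t 1; first by rewrite ln1; lra.
have lt1t : 1 < t by rewrite lt_neqAle eq_sym t_neq1.
pose F : R -> R := (shift 1 * (@ln R)) - (2 \*: id).
have dF (x : R) : 0 < x -> is_derive x 1 F (ln x - 1 + x^-1).
  move=> x0.
  have dFx := is_deriveB (is_deriveM (is_derive_shift x 1 1) (is_derive1_ln x0))
                         (is_deriveZ 2 (is_derive_id x 1)).
  apply: is_derive_eq.
  rewrite /shift /= -[(x + 1) *: x^-1]/((x + 1) * x^-1) mulrDl divff ?gt_eqF //.
  rewrite [X in _ + X - _]mulr1 [X in _ - X = _]mulr1 mul1r; lra.
have dF' (x : R) : x \in `]1, t[ -> is_derive x 1 F (ln x - 1 + x^-1).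
  by rewrite in_itv /= => /andP[x1 _]; apply: dF; lra.
have cF : {within `[1, t], continuous F}.
  apply: derivable_within_continuous => x; rewrite in_itv /= => /andP[x1 _].
  by apply: ex_derive; apply: dF; lra.
have [c] := MVT lt1t dF' cF; rewrite in_itv /= => /andP[c1 _].
have FE (u : R) : F u = (u + 1) * ln u - 2 * u by [].
rewrite !FE ln1 => eqF.
have : 0 <= (ln c - 1 + c^-1) * (t - 1).
  by apply: mulr_ge0; [have := ln_ge_subrV _ (lt_trans ltr01 c1)|]; lra.
lra.
Qed.

Lemma logmean_le_mean p q : 0 < q -> q <= p -> 2 * (p - q) <= (p + q) * (ln p - ln q).
Proof.
move=> q0 qp; have p0 : 0 < p by lra.
have pq1 : 1 <= p / q by rewrite ler_pdivlMr // mul1r.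
have := ln_ge_mean_ratio _ pq1.
rewrite ln_div ?posrE // -(ler_pM2r q0).
have -> : 2 * (p / q - 1) * q = 2 * (p - q) by field; rewrite gt_eqF.
by have -> : (p / q + 1) * (ln p - ln q) * q = (p + q) * (ln p - ln q) by field; rewrite gt_eqF.
Qed.

Lemma sqr_sqrtB_le_lnB a b : 0 < a -> 0 < b ->
  4 * (Num.sqrt a - Num.sqrt b) ^+ 2 <= (ln a - ln b) * (a - b).
Proof.
wlog ba : a b / b <= a => [hwlog a0 b0|a0 b0].
  have [|ab] := lerP b a; first by move/hwlog; apply.
  have := hwlog b a (ltW ab) b0 a0.
  have -> : (Num.sqrt b - Num.sqrt a) ^+ 2 = (Num.sqrt a - Num.sqrt b) ^+ 2 by ring.
  by have -> : (ln b - ln a) * (b - a) = (ln a - ln b) * (a - b) by ring.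
set p := Num.sqrt a; set q := Num.sqrt b.
have q0 : 0 < q by rewrite sqrtr_gt0.
have qp : q <= p by rewrite ler_sqrt // ltW.
have [-> ->] : a = p ^+ 2 /\ b = q ^+ 2 by rewrite !sqr_sqrtr // ltW.
rewrite !lnXn //; last by lra.
have pq0 : 0 <= p - q by lra.
have := ler_wpM2r pq0 (logmean_le_mean _ _ q0 qp).
have -> : (ln p *+ 2 - ln q *+ 2) * (p ^+ 2 - q ^+ 2)
  = 2 * ((p + q) * (ln p - ln q) * (p - q)) by ring.
have -> : 4 * (p - q) ^+ 2 = 2 * (2 * (p - q) * (p - q)) by ring.
lra.
Qed.

(* With [r = sqrt (n v)]: [v ln (n v) = 2 v ln r <= 2 v (r - 1)], and the gap
   to the right-hand side is [(r - 1)^2 / n]. *)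
Lemma entropy_density_le n v : 0 < n -> 0 <= v ->
  v * (ln v + ln n) <= 2 * Num.sqrt (n * v) * (v - n^-1) - (v - n^-1).
Proof.
move=> n0 v0; have [->|v_neq0] := eqVneq v 0.
  by rewrite mul0r mulr0 sqrtr0 mulr0 mul0r; have := invr_gt0 n; rewrite n0; lra.
have {v0 v_neq0} v0 : 0 < v by rewrite lt_neqAle eq_sym v_neq0.
have nv0 : 0 < n * v by rewrite mulr_gt0.
set r := Num.sqrt (n * v); have r0 : 0 < r by rewrite sqrtr_gt0.
have nvE : n * v = r ^+ 2 by rewrite sqr_sqrtr // ltW.
rewrite addrC -lnM ?posrE // nvE lnXn //.
have vE : v = r ^+ 2 / n by rewrite -nvE; field; rewrite gt_eqF.
have : v * (ln r *+ 2) <= v * (2 * (r - 1)).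
  by rewrite ler_pM2l // mulr2n; have := ln_le_subr1 _ r0; lra.
have : 2 * r * (v - n^-1) - (v - n^-1) - v * (2 * (r - 1)) = (r - 1) ^+ 2 / n.
  by rewrite vE; field; rewrite gt_eqF.
have : 0 <= (r - 1) ^+ 2 / n by rewrite divr_ge0 // ?sqr_ge0 // ltW.
lra.
Qed.

(* [lam = h / (4 w)] is the optimal choice; [w = 0] forces [h <= 0]. *)
Lemma le_sqrt_of_forall_lam (h w i a : R) : 0 <= w -> 0 <= a -> 4 * a <= i ->
  (forall lam : R, 0 < lam -> h <= 2 * lam * w + a / lam) ->
  h <= Num.sqrt 2 * Num.sqrt w * Num.sqrt i.
Proof.
move=> w0 a0 ai hle; have i0 : 0 <= i by lra.
have [h_le0|h0] := lerP h 0; first by apply: le_trans h_le0 _; rewrite !mulr_ge0 ?sqrtr_ge0.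
have {w0} w0 : 0 < w.
  rewrite lt_neqAle w0 andbT; apply/eqP => w_eq0.
  have lam0 : 0 < (a + 1) / h by rewrite divr_gt0 //; lra.
  have := hle _ lam0; rewrite -w_eq0 mulr0 add0r.
  have -> : a / ((a + 1) / h) = a * h / (a + 1) by field; rewrite !gt_eqF //; lra.
  by rewrite ler_pdivlMr; [nra | lra].
have := hle _ (divr_gt0 h0 (mulr_gt0 (ltr0n _ 4) w0)).
have -> : 2 * (h / (4 * w)) * w = h / 2 by field; rewrite gt_eqF.
have -> : a / (h / (4 * w)) = 4 * a * w / h by field; rewrite !gt_eqF.
rewrite -lerBlDl ler_pdivlMr // => h2.
have : h ^+ 2 <= 2 * w * i by have := ler_wpM2r (ltW w0) ai; nra.
set r := Num.sqrt 2 * Num.sqrt w * Num.sqrt i.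
have r0 : 0 <= r by rewrite !mulr_ge0 ?sqrtr_ge0.
have -> : 2 * w * i = r ^+ 2 by rewrite !exprMn !sqr_sqrtr ?(ltW w0).
by nra.
Qed.

End LogInequalities.

Section Excess.
Context {R : realType} (lam : R).
Hypothesis lam0 : 0 < lam.

Definition excess (a : R) (j : nat) : R := Num.max 0 (a - 2 * lam * j%:R).

Lemma excess_ge0 a j : 0 <= excess a j.
Proof. by rewrite le_max lexx. Qed.

Lemma excess_ge a j : a - 2 * lam * j%:R <= excess a j.
Proof. by rewrite le_max lexx orbT. Qed.

Lemma excess_le_sqrB a j :
  excess a j.+1 <= (excess a j ^+ 2 - excess a j.+1 ^+ 2) / (4 * lam).
Proof.
have lam4 : 0 < 4 * lam by rewrite mulr_gt0.
rewrite ler_pdivlMr // /excess.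
set u := a - 2 * lam * j.+1%:R.
have -> : a - 2 * lam * j%:R = u + 2 * lam by rewrite /u -addn1 natrD; ring.
have [u0|u0] := leP 0 u.
  rewrite !max_r //; last by have := lam0; lra.
  by have := sqr_ge0 lam; nra.
by rewrite mul0r expr0n subr0 sqr_ge0.
Qed.

(* Telescoping, with [excess a 0 = a] for [a >= 0]. *)
Lemma sum_excess_le a m : 0 <= a -> \sum_(k < m) excess a k.+1 <= a ^+ 2 / (4 * lam).
Proof.
move=> a0.
suff : \sum_(k < m) excess a k.+1 <= (excess a 0 ^+ 2 - excess a m ^+ 2) / (4 * lam).
  rewrite /excess mulr0 subr0 (max_r a0) mulrBl => /le_trans; apply.
  by rewrite gerBl divr_ge0 ?sqr_ge0 // ltW // mulr_gt0.
elim: m => [|m IHm]; first by rewrite big_ord0 subrr mul0r.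
rewrite big_ord_recr /=; have := excess_le_sqrB a m.
by rewrite !mulrBl in IHm *; lra.
Qed.

End Excess.

Section Cycle.
Context {N : nat}.
Implicit Types x y : 'I_N.

Definition tshift (k : nat) y : 'I_N := iter k (@tsucc N) y.

Lemma tshift_val k y : val (tshift k y) = ((y + k) %% N)%N.
Proof.
elim: k => [|k IHk]; first by rewrite addn0 modn_small.
by rewrite /tshift iterS -/(tshift k y) /= IHk -addn1 modnDml addn1 addnS.
Qed.

Lemma tshift_inj k : injective (tshift k).
Proof.
move=> x y /(congr1 val); rewrite !tshift_val => /eqP; rewrite eqn_modDr.
by rewrite !modn_small // => /eqP/val_inj.
Qed.

Lemma tshiftN y : tshift N y = y.
Proof. by apply: val_inj; rewrite tshift_val modnDr modn_small. Qed.

Lemma tsucc_tshift_subS k y : (k < N)%N -> tsucc (tshift (N - k.+1) y) = tshift (N - k) y.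
Proof. by move=> kN; rewrite /tshift -iterS subnSK. Qed.

Lemma tshift_fwd x y : tshift ((x + N - y) %% N) y = x.
Proof.
apply: val_inj; rewrite tshift_val /= modnDmr subnKC; last first.
  by apply: leq_trans (ltnW (ltn_ord y)) (leq_addl _ _).
by rewrite modnDr modn_small.
Qed.

Lemma tshift_bwd x y : tshift (N - (y + N - x) %% N) y = x.
Proof.
set m := ((y + N - x) %% N)%N.
have mN : (m < N)%N by rewrite ltn_pmod // (ord_pos x).
apply: val_inj; rewrite tshift_val /=.
rewrite -[RHS](@modn_small x N) //; apply/eqP.
rewrite -(eqn_modDr m) -addnA subnK; last exact: ltnW.
rewrite /m modnDmr subnKC; last by apply: leq_trans (ltnW (ltn_ord x)) (leq_addl _ _).
by rewrite modnDr.
Qed.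

Lemma tdist_eq0 x y : tdist x y = 0%N -> x = y.
Proof.
rewrite /tdist; case: leqP => _ d0; first by rewrite -(tshift_fwd x y) d0.
by rewrite -(tshift_bwd x y) d0 subn0 tshiftN.
Qed.

End Cycle.

Definition tdiff {R : realType} {N : nat} (s : 'I_N -> R) (z : 'I_N) : R :=
  s (tsucc z) - s z.

Section Potential.
Context {R : realType} {N : nat} (s : 'I_N -> R) (lam : R).
Hypothesis lam0 : 0 < lam.
Implicit Types x y z : 'I_N.

Let edge_excess z j := excess lam `|tdiff s z| j.

Lemma charge_succ (m : nat) :
  lam * (m.+1%:R + m.+1%:R ^+ 2) = lam * (m%:R + m%:R ^+ 2) + 2 * lam * m.+1%:R.
Proof. by rewrite -addn1 natrD; ring. Qed.

(* Along the path [y, y + 1, ..., y + m] the [k]-th edge may carry [2 lam (k + 1)]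
   for free, and these allowances add up to [lam (m + m^2)]. *)
Lemma sub_tshift_le m y :
  s (tshift m y) - s y - lam * (m%:R + m%:R ^+ 2)
    <= \sum_(k < m) edge_excess (tshift k y) k.+1.
Proof.
elim: m => [|m IHm]; first by rewrite big_ord0 /= expr0n /= addr0 mulr0 !subrr.
rewrite big_ord_recr /= charge_succ.
have := excess_ge lam `|tdiff s (tshift m y)| m.+1.
have := ler_norm (tdiff s (tshift m y)).
by rewrite /edge_excess /tdiff /= -/(tshift m.+1 y); lra.
Qed.

Lemma sub_tshift_bwd_le m y : (m <= N)%N ->
  s (tshift (N - m) y) - s y - lam * (m%:R + m%:R ^+ 2)
    <= \sum_(k < m) edge_excess (tshift (N - k.+1) y) k.+1.
Proof.
elim: m => [|m IHm] mN.
  by rewrite big_ord0 subn0 tshiftN /= expr0n /= addr0 mulr0 !subrr.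
rewrite big_ord_recr /= charge_succ.
have := IHm (ltnW mN).
have := excess_ge lam `|tdiff s (tshift (N - m.+1) y)| m.+1.
have := ler_norm (- tdiff s (tshift (N - m.+1) y)); rewrite normrN.
by rewrite /edge_excess /tdiff tsucc_tshift_subS //; lra.
Qed.

Definition pot_bound y : R :=
  \sum_(k < N) (edge_excess (tshift k y) k.+1 + edge_excess (tshift (N - k.+1) y) k.+1).

Lemma sum_ord_widen (F : nat -> R) m : (m <= N)%N -> (forall k, 0 <= F k) ->
  \sum_(k < m) F k <= \sum_(k < N) F k.
Proof.
move=> mN F0; rewrite (big_ord_widen N F mN) [leRHS](bigID (fun k : 'I_N => (k < m)%N)) /=.
by rewrite lerDl sumr_ge0.
Qed.

(* [tdist x y] is the length of the forward or of the backward path from [y] to [x]. *)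
Lemma sub_le_pot_bound x y :
  s x - s y - lam * ((tdist x y)%:R + (tdist x y)%:R ^+ 2) <= pot_bound y.
Proof.
have excess0 k z : 0 <= edge_excess z k by exact: excess_ge0.
rewrite /tdist /pot_bound big_split /=.
set m1 := ((x + N - y) %% N)%N; set m2 := ((y + N - x) %% N)%N.
have m1N : (m1 <= N)%N by rewrite ltnW // ltn_pmod // (ord_pos x).
have m2N : (m2 <= N)%N by rewrite ltnW // ltn_pmod // (ord_pos x).
have fwd0 : 0 <= \sum_(k < N) edge_excess (tshift k y) k.+1 by apply: sumr_ge0.
have bwd0 : 0 <= \sum_(k < N) edge_excess (tshift (N - k.+1) y) k.+1 by apply: sumr_ge0.
case: leqP => _.
- have := sub_tshift_le m1 y; rewrite tshift_fwd.
  have := sum_ord_widen (fun k => edge_excess (tshift k y) k.+1) _ m1N (fun k => excess0 _ _).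
  lra.
- have := sub_tshift_bwd_le m2 y m2N; rewrite tshift_bwd.
  have := sum_ord_widen (fun k => edge_excess (tshift (N - k.+1) y) k.+1) _ m2N
                        (fun k => excess0 _ _).
  lra.
Qed.

Lemma sum_pot_bound_le : \sum_y pot_bound y <= \sum_z tdiff s z ^+ 2 / (2 * lam).
Proof.
have shift_sum k j : \sum_y edge_excess (tshift k y) j = \sum_z edge_excess z j.
  by rewrite [RHS](reindex_inj (tshift_inj k)).
rewrite /pot_bound exchange_big /=.
under eq_bigr do rewrite big_split /= !shift_sum -mulr2n.
rewrite sumrMnl exchange_big /=.
have -> : \sum_z tdiff s z ^+ 2 / (2 * lam) = (\sum_z tdiff s z ^+ 2 / (4 * lam)) *+ 2.
  by rewrite -sumrMnl; apply: eq_bigr => z _; rewrite mulr2n; field; rewrite gt_eqF.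
rewrite lerMn2r /=; apply: ler_sum => z _.
by have := sum_excess_le lam lam0 _ N (normr_ge0 (tdiff s z)); rewrite real_normK ?num_real.
Qed.

End Potential.

Definition cost {R : realType} {N : nat} (pi : 'I_N -> 'I_N -> R) : R :=
  \sum_(x < N) \sum_(y < N) pi x y * ((tdist x y)%:R + (tdist x y)%:R ^+ 2).

Section Couplings.
Context {R : realType} {N : nat}.
Implicit Types (nu mu : 'I_N -> R) (pi : 'I_N -> 'I_N -> R).

Lemma unif_prob : (0 < N)%N -> is_prob (@unif R N).
Proof.
move=> N0; split=> [x|]; first by rewrite /unif invr_ge0.
by rewrite /unif sumr_const card_ord -[_ *+ N]mulr_natr mulVf // pnatr_eq0 -lt0n.
Qed.

Lemma is_coupling_prod nu mu : is_prob nu -> is_prob mu ->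
  is_coupling nu mu (fun x y => nu x * mu y).
Proof.
move=> [nu0 nu1] [mu0 mu1]; split; first by move=> x y; rewrite mulr_ge0.
by split=> [x|y]; rewrite -?mulr_sumr -?mulr_suml ?nu1 ?mu1 ?mulr1 ?mul1r.
Qed.

Lemma cost_ge0 pi : (forall x y, 0 <= pi x y) -> 0 <= cost pi.
Proof.
move=> pi0; apply: sumr_ge0 => x _; apply: sumr_ge0 => y _.
by rewrite mulr_ge0 // addr_ge0 // exprn_ge0.
Qed.

Lemma Wc2E nu mu : Wc2 nu mu = inf [set cost pi | pi in is_coupling nu mu].
Proof.
congr inf; apply/seteqP; split=> c /=; first by case=> pi [? ->]; exists pi.
by case=> pi ? <-; exists pi.
Qed.

Lemma Wc2_ge nu mu b : is_prob nu -> is_prob mu ->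
  (forall pi, is_coupling nu mu pi -> b <= cost pi) -> b <= Wc2 nu mu.
Proof.
move=> nuP muP le_cost; rewrite Wc2E; apply: lb_le_inf.
  exists (cost (fun x y => nu x * mu y)), (fun x y => nu x * mu y) => //.
  exact: is_coupling_prod.
by move=> _ [pi hpi <-]; exact: le_cost.
Qed.

Lemma Wc2_ge0 nu mu : is_prob nu -> is_prob mu -> 0 <= Wc2 nu mu.
Proof. by move=> nuP muP; apply: Wc2_ge => // pi [pi0 _]; exact: cost_ge0. Qed.

(* The [mu]-mass at a point that [nu] does not charge travels at least one step. *)
Lemma Wc2_ge_mass nu mu z : is_prob nu -> is_prob mu -> nu z = 0 -> 2 * mu z <= Wc2 nu mu.
Proof.
move=> nuP muP nuz0; apply: Wc2_ge => // pi [pi0 [row col]].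
have piz0 y : pi z y = 0 by have := row z; rewrite nuz0 => /psumr_eq0P; apply.
have cost_ge x : 2 * pi x z <= \sum_y pi x y * ((tdist x y)%:R + (tdist x y)%:R ^+ 2).
  rewrite (bigD1 z) //= -[leLHS]addr0 lerD //; last first.
    by apply: sumr_ge0 => y _; rewrite mulr_ge0 // addr_ge0 // exprn_ge0.
  have [->|xz] := eqVneq x z; first by rewrite piz0 mulr0 mul0r.
  have d1 : 1 <= (tdist x z)%:R :> R.
    by rewrite ler1n lt0n; apply: contra_neq xz => /tdist_eq0.
  by rewrite mulrC ler_wpM2l //; set d := (tdist x z)%:R; rewrite expr2; nra.
by rewrite -col mulr_sumr; apply: ler_sum => x _; exact: cost_ge.
Qed.

End Couplings.

Section EntropyTransport.
Context {R : realType} {N : nat} {nu : 'I_N -> R}.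
Hypotheses (N0 : (0 < N)%N) (nuP : is_prob nu).
Implicit Types (s : 'I_N -> R) (pi : 'I_N -> 'I_N -> R) (lam : R).

Let n : R := N%:R.
Let n0 : 0 < n. Proof. by rewrite ltr0n. Qed.

Lemma sum_potential_le_cost s lam pi : 0 < lam -> is_coupling nu (@unif R N) pi ->
  \sum_x s x * (nu x - n^-1) <= lam * cost pi + (\sum_z tdiff s z ^+ 2) / (2 * lam * n).
Proof.
move=> lam0 [pi0 [row col]].
have transportE : \sum_x s x * (nu x - n^-1) = \sum_x \sum_y pi x y * (s x - s y).
  rewrite [RHS](eq_bigr (fun x => s x * nu x - \sum_y pi x y * s y)); last first.
    move=> x _; rewrite -row mulr_sumr -sumrB.
    by apply: eq_bigr => y _; rewrite mulrBr mulrC.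
  rewrite sumrB [X in _ = _ - X]exchange_big -sumrB; apply: eq_bigr => x _ /=.
  by rewrite -mulr_suml col mulrBr [unif _ _ * _]mulrC.
have unifE (b : 'I_N -> R) : \sum_x \sum_y pi x y * b y = n^-1 * \sum_y b y.
  by rewrite exchange_big mulr_sumr; apply: eq_bigr => y _; rewrite -mulr_suml col.
rewrite transportE.
apply: (@le_trans _ _ (lam * cost pi + n^-1 * \sum_y pot_bound s lam y)).
  rewrite -unifE /cost mulr_sumr -big_split; apply: ler_sum => x _.
  rewrite mulr_sumr -big_split; apply: ler_sum => y _ /=.
  rewrite mulrCA -mulrDr ler_wpM2l //; have := sub_le_pot_bound s lam x y; lra.
rewrite lerD2l invfM mulrA mulrC ler_wpM2r ?invr_ge0 ?(ltW n0) //.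
by rewrite mulr_suml; exact: sum_pot_bound_le.
Qed.

Lemma sum_potential_le_Wc2 s lam : 0 < lam ->
  \sum_x s x * (nu x - n^-1)
    <= lam * Wc2 nu (@unif R N) + (\sum_z tdiff s z ^+ 2) / (2 * lam * n).
Proof.
move=> lam0; rewrite addrC -lerBlDl -ler_pdivrMl //.
apply: Wc2_ge => // [|pi hpi]; first exact: unif_prob.
by rewrite ler_pdivrMl // lerBlDl addrC; exact: sum_potential_le_cost.
Qed.

Let rho x : R := Num.sqrt (n * nu x).

Lemma rel_entropy_le_potential : rel_entropy nu <= 2 * \sum_x rho x * (nu x - n^-1).
Proof.
case: nuP => nu0 nu1.
have centered : \sum_x (nu x - n^-1) = 0.
  by rewrite sumrB nu1 sumr_const card_ord -[_ *+ N]mulr_natr mulVf ?subrr // gt_eqF.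
apply: le_trans (ler_sum _ (fun x _ => entropy_density_le _ _ n0 (nu0 x))) _.
rewrite sumrB centered subr0 mulr_sumr.
by under [leRHS]eq_bigr do rewrite mulrA.
Qed.

Lemma rel_entropy_le_Wc2 lam : 0 < lam ->
  rel_entropy nu <= 2 * lam * Wc2 nu (@unif R N) + (\sum_z tdiff rho z ^+ 2) / n / lam.
Proof.
move=> lam0; apply: le_trans rel_entropy_le_potential _.
have := ler_wpM2l (ler0n R 2) (sum_potential_le_Wc2 rho lam lam0).
suff -> : 2 * (lam * Wc2 nu (@unif R N) + (\sum_z tdiff rho z ^+ 2) / (2 * lam * n))
  = 2 * lam * Wc2 nu (@unif R N) + (\sum_z tdiff rho z ^+ 2) / n / lam by [].
by field; rewrite !gt_eqF.
Qed.

Lemma fisher_sum_ge : (forall z, (nu z == 0) = (nu (tsucc z) == 0)) ->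
  4 * ((\sum_z tdiff rho z ^+ 2) / n)
    <= \sum_z (ln (nu (tsucc z)) - ln (nu z)) * (nu (tsucc z) - nu z).
Proof.
case: nuP => nu0 _ zero_edge.
rewrite mulr_suml mulr_sumr; apply: ler_sum => z _.
rewrite /tdiff /rho !sqrtrM ?(ltW n0) // -mulrBr exprMn sqr_sqrtr ?(ltW n0) //.
rewrite mulrAC divff ?gt_eqF // mul1r.
have [nuz0|nuz_neq0] := eqVneq (nu z) 0.
  have nuSz0 : nu (tsucc z) = 0 by apply/eqP; rewrite -zero_edge nuz0.
  by rewrite nuz0 nuSz0 !subrr expr0n /= !mulr0.
have nuSz_neq0 : nu (tsucc z) != 0 by rewrite -zero_edge.
by apply: sqr_sqrtB_le_lnB; rewrite lt_neqAle eq_sym ?nuz_neq0 ?nuSz_neq0 nu0.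
Qed.

End EntropyTransport.

Theorem mainTheorem2 (R : realType) (N : nat) (hN : (1 <= N)%N)
  (nu : 'I_N -> R) (hnu : is_prob nu) :
  ((rel_entropy nu)%:E <=
     ((Num.sqrt 2 * Wc nu (@unif R N))%:E * sqrte (fisher nu)))%E.
Proof.
have unifP := unif_prob (R := R) hN.
have W0 := Wc2_ge0 _ _ hnu unifP.
rewrite /fisher; case: ifPn => [/existsP[x one_zero]|].
  have [z nuz0] : exists z, nu z = 0.
    have [|nux] := eqVneq (nu x) 0; first by exists x.
    by exists (tsucc x); apply/eqP; move: one_zero; rewrite (negbTE nux); case: (_ == 0).
  have Wpos : 0 < Wc2 nu (@unif R N).
    apply: lt_le_trans (Wc2_ge_mass _ _ _ hnu unifP nuz0).
    by rewrite mulr_gt0 // invr_gt0 ltr0n.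
  by rewrite gt0_muley ?leey // lte_fin mulr_gt0 // sqrtr_gt0.
rewrite negb_exists => /forallP no_one_zero.
rewrite /= -EFinM lee_fin.
apply: (le_sqrt_of_forall_lam _ _ _ _ W0 _ _ (rel_entropy_le_Wc2 hN hnu)).
  by rewrite divr_ge0 ?sumr_ge0 // => z _; rewrite sqr_ge0.
by apply: fisher_sum_ge hN hnu _ => z; have /negbNE/eqP := no_one_zero z.
Qed.
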